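(* Let $0 < \alpha < 10^{-6}$ and let $n, d \in \mathbb{N}$ satisfy $n/150 \le d \le n/3$. Let $V, W$ be a partition of a set of $n$ vertices with $|W| = d$ and $|V| = n-d$. Suppose that $H$ is a $3$-uniform hypergraph on vertex set $V \cup W$ in which every vertex is $\alpha$-good (with respect to $H_{n,d}(V,W)$). Then $H$ contains a matching of size $d$.
   Context: Given a partition $V, W$ of a set of $n$ vertices with $|W| = d \le n/3$, $H_{n,d}(V,W)$ denotes the $3$-uniform hypergraph on vertex set $V \cup W$ whose edges are exactly the $3$-sets with either exactly two vertices in $V$ and one in $W$, or exactly one vertex in $V$ and two in $W$. For a vertex $v$ of a $3$-uniform hypergraph $G$, $N_G(v)$ denotes the set of unordered pairs $\{a,b\}$ such that $\{v,a,b\}$ is an edge of $G$. For a $3$-uniform hypergraph $H$ on vertex set $V \cup W$, a vertex $v$ is $\alpha$-good if $|N_{H_{n,d}(V,W)}(v) \setminus N_H(v)| \le \alpha n^2$, and $\alpha$-bad otherwise. *)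

From HB Require Import structures.
From mathcomp Require Import all_boot all_order all_algebra.
Set Implicit Arguments. Unset Strict Implicit. Unset Printing Implicit Defensive.
Import Order.TTheory GRing.Theory Num.Theory.

Definition uniform3 (T : finType) (H : {set {set T}}) : bool :=
  [forall e in H, #|e| == 3].

Definition Hnd (T : finType) (W : {set T}) : {set {set T}} :=
  [set e : {set T} | (#|e| == 3) &&
     (((#|e :&: ~: W| == 2) && (#|e :&: W| == 1)) ||
      ((#|e :&: ~: W| == 1) && (#|e :&: W| == 2)))].

Definition link (T : finType) (G : {set {set T}}) (v : T) : {set {set T}} :=
  [set P : {set T} | (#|P| == 2) && (v \notin P) && (v |: P \in G)].

Definition good (R : realFieldType) (T : finType) (W : {set T})
    (H : {set {set T}}) (alpha : R) (v : T) : Prop :=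
  (#|link (Hnd W) v :\: link H v|%:R <= alpha * (#|T|%:R ^+ 2))%R.

Definition matching (T : finType) (H M : {set {set T}}) : bool :=
  (M \subset H) &&
  [forall e1 in M, forall e2 in M, (e1 != e2) ==> [disjoint e1 & e2]].

From HB Require Import structures.
From mathcomp Require Import all_boot all_order all_algebra zify.
Set Implicit Arguments. Unset Strict Implicit. Unset Printing Implicit Defensive.
Import Order.TTheory GRing.Theory Num.Theory.

(* Grow, one edge at a time, a matching of H whose edges have one vertex in W
   and two in V.  Let M be such a matching with k < d edges, w an uncovered
   vertex of W and U the set of uncovered vertices of V, so |U| >= n - d - 2k.
   If no pair of U spans an edge of H with w, the C(|U|,2) pairs are missing
   from the link of w.  Otherwise pick x != y in U: for edges {w1,a1,b1} and
   {w2,a2,b2} of M, the three 3-sets {w,a1,b2}, {w1,x,a2}, {w2,y,b1} are edges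
   of H_{n,d}, and if they all lie in H they replace the two edges.  If none of
   the k(k-1) ordered pairs of edges allows this, each pair yields a different
   missing link pair at w, x or y.  Goodness bounds the number of missing link
   pairs at any vertex by alpha n^2, which forces |U| and k to be O(sqrt(alpha) n),
   contradicting |U| + 2k >= n - d >= 2n/3. *)

Lemma set1I (T : finType) (x : T) (A : {set T}) :
  [set x] :&: A = if x \in A then [set x] else set0.
Proof. by case: ifP => xA; apply/setP=> z; rewrite !inE; case: eqP => // ->. Qed.

Lemma link_set2 (T : finType) (G : {set {set T}}) (v p q : T) :
  v != p -> v != q -> p != q -> ([set p; q] \in link G v) = ([set v; p; q] \in G).
Proof. by move=> vp vq pq; rewrite inE cards2 pq !inE negb_or vp vq setUA. Qed.

Definition offdiag (I : finType) (A : {set I}) : {set I * I} :=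
  setX A A :\: [set (i, i) | i in A].

Lemma mem_offdiag (I : finType) (A : {set I}) (i j : I) :
  ((i, j) \in offdiag A) = [&& i \in A, j \in A & i != j].
Proof.
rewrite !inE /=; have [<-|ij] := eqVneq i j.
  rewrite andbb !andbF; apply/negbTE/andP=> -[/negP nX iA].
  by apply: nX; apply: (imset_f (fun k => (k, k))).
have -> : (i, j) \in [set (k, k) | k in A] = false.
  by apply/imsetP=> -[k _ [ik jk]]; rewrite ik jk eqxx in ij.
by rewrite /= andbT.
Qed.

Lemma card_offdiag (I : finType) (A : {set I}) : #|offdiag A| = #|A| * #|A|.-1.
Proof.
rewrite cardsD cardsX (setIidPr _); last first.
  by apply/subsetP=> _ /imsetP[i iA ->]; rewrite inE /= iA.
by rewrite card_in_imset => [|i j _ _ [] //]; rewrite -subn1 mulnBr muln1.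
Qed.

Lemma mul_pred_small m n : 1000 * 1000 * (m * m.-1) <= 3 * n ^ 2 -> 500 * m.-1 <= n.
Proof.
move=> h; rewrite -leq_sqr.
have : m.-1 * m.-1 <= m * m.-1 by rewrite leq_mul2r leq_pred orbT.
nia.
Qed.

Lemma greedy_count_contradiction n d k u cw cx cy :
  3 * d <= n -> k < d -> n - d <= u + 2 * k ->
  'C(u, 2) <= cw -> k * k.-1 <= cw + cx + cy ->
  1000 * 1000 * cw <= n ^ 2 -> 1000 * 1000 * cx <= n ^ 2 ->
  1000 * 1000 * cy <= n ^ 2 -> False.
Proof.
move=> dn kd Vu Cu Ck hw hx hy.
have Cu2 : u * u.-1 = 'C(u, 2) * 2 by rewrite bin_ffact ffactnS ffactn1.
have u2 : 1 < u by lia.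
have n1000 : 1000 <= n.
  have : 0 < 'C(u, 2) by rewrite bin_gt0.
  rewrite -leq_sqr; nia.
have : 500 * u.-1 <= n by apply: mul_pred_small; nia.
have : 500 * k.-1 <= n by apply: mul_pred_small; nia.
lia.
Qed.

Section WvvMatching.

Variables (T : finType) (W : {set T}) (H : {set {set T}}).

(* The matching is built from labelled edges: a triple (w, a, b) stands for
   {w, a, b} with w in W and a, b outside W, so that the counting argument can
   name the W-vertex and the two V-vertices of each edge in a fixed order. *)
Definition tw (t : T * T * T) : T := t.1.1.
Definition ta (t : T * T * T) : T := t.1.2.
Definition tb (t : T * T * T) : T := t.2.

Definition tedge (t : T * T * T) : {set T} := [set tw t; ta t; tb t].

Definition wvv (t : T * T * T) : bool :=
  [&& tw t \in W, ta t \notin W, tb t \notin W & ta t != tb t].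

Definition tcover (M : {set T * T * T}) : {set T} := \bigcup_(t in M) tedge t.

Record wvv_matching (M : {set T * T * T}) : Prop := WvvMatching {
  wvv_matching_edge : {in M, forall t, wvv t && (tedge t \in H)};
  wvv_matching_inj : {in M &, injective tedge};
  wvv_matching_triv : trivIset (tedge @: M) }.

Definition missing_links (v : T) : {set {set T}} := link (Hnd W) v :\: link H v.

Implicit Types (t : T * T * T) (M K N : {set T * T * T}) (X : {set T}).

Lemma tedge_vertices t : [/\ tw t \in tedge t, ta t \in tedge t & tb t \in tedge t].
Proof. by rewrite !inE !eqxx !orbT. Qed.

Lemma wvv_neq t : wvv t -> [/\ tw t != ta t, tw t != tb t & ta t != tb t].
Proof. by case/and4P=> wW aV bV ab; split=> //; apply: contraTneq wW => ->. Qed.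

Lemma card_tedge t : wvv t -> #|tedge t| = 3.
Proof.
case/wvv_neq=> wa wb ab.
by rewrite /tedge -setUA cardsU1 cards2 ab !inE negb_or wa wb.
Qed.

Lemma wvv_Hnd t : wvv t -> tedge t \in Hnd W.
Proof.
move=> ht; rewrite inE card_tedge //; have [_ _ ab] := wvv_neq ht.
case/and4P: ht => wW aV bV _; rewrite /tedge !setIUl !set1I !inE.
by rewrite wW (negbTE aV) (negbTE bV) /= set0U !setU0 cards1 cards2 ab.
Qed.

Lemma wvv_link_w G t : wvv t -> ([set ta t; tb t] \in link G (tw t)) = (tedge t \in G).
Proof. by case/wvv_neq=> wa wb ab; rewrite link_set2. Qed.

Lemma wvv_link_a G t : wvv t -> ([set tw t; tb t] \in link G (ta t)) = (tedge t \in G).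
Proof.
case/wvv_neq=> wa wb ab; rewrite link_set2 // 1?eq_sym //.
by rewrite /tedge (setUC [set ta t]).
Qed.

Lemma mem_tcover M t z : t \in M -> z \in tedge t -> z \in tcover M.
Proof. by move=> tM zt; apply/bigcupP; exists t. Qed.

Lemma tcover1 t : tcover [set t] = tedge t.
Proof. exact: big_set1. Qed.

Lemma tcover_setU M N : tcover (M :|: N) = tcover M :|: tcover N.
Proof. exact: bigcup_setU. Qed.

Lemma disjoint_set3_tcover M u v z : u \notin tcover M -> v \notin tcover M ->
  z \notin tcover M -> [disjoint [set u; v; z] & tcover M].
Proof.
move=> uc vc zc; rewrite disjoints_subset; apply/subsetP=> s.
by rewrite !inE => /orP[/orP[]|] /eqP->.
Qed.

Lemma wvv_matching_wvv M : wvv_matching M -> {in M, forall t, wvv t}.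
Proof. by case=> Medge _ _ t /Medge /andP[]. Qed.

Lemma wvv_matching_uniq M z t t' : wvv_matching M -> t \in M -> t' \in M ->
  z \in tedge t -> z \in tedge t' -> t = t'.
Proof.
case=> _ inj /trivIsetP triv tM t'M zt zt'.
have [|ne] := eqVneq (tedge t) (tedge t'); first exact: inj.
by rewrite (disjointFr (triv _ _ (imset_f _ tM) (imset_f _ t'M) ne) zt) in zt'.
Qed.

Lemma wvv_matching_matching M : wvv_matching M ->
  matching H (tedge @: M) /\ #|tedge @: M| = #|M|.
Proof.
case=> Medge inj /trivIsetP triv; split; last exact: card_in_imset.
apply/andP; split; first by apply/subsetP=> _ /imsetP[t /Medge /andP[_ tH] ->].
by apply/forall_inP=> e1 e1M; apply/forall_inP=> e2 e2M; apply/implyP; apply: triv.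
Qed.

Lemma card_W_tcover M : {in M, forall t, wvv t} -> #|W| <= #|W :\: tcover M| + #|M|.
Proof.
move=> Mwvv; rewrite -(cardsID (tcover M) W) addnC leq_add2l.
apply: leq_trans (leq_imset_card tw M); apply/subset_leq_card/subsetP=> z.
rewrite inE => /andP[zW /bigcupP[t tM]]; case/and4P: (Mwvv t tM) => _ aV bV _.
rewrite !inE => /orP[/orP[]|] /eqP zt; first by rewrite zt imset_f.
  by rewrite zt (negbTE aV) in zW.
by rewrite zt (negbTE bV) in zW.
Qed.

Lemma card_V_tcover M : {in M, forall t, wvv t} ->
  #|~: W| <= #|~: W :\: tcover M| + 2 * #|M|.
Proof.
move=> Mwvv; rewrite -(cardsID (tcover M) (~: W)) addnC leq_add2l.
apply: (@leq_trans #|ta @: M :|: tb @: M|).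
  apply/subset_leq_card/subsetP=> z; rewrite !inE => /andP[zV /bigcupP[t tM]].
  case/and4P: (Mwvv t tM) => wW _ _ _.
  rewrite !inE => /orP[/orP[]|] /eqP zt; first by rewrite zt wW in zV.
    by rewrite zt imset_f.
  by rewrite zt imset_f ?orbT.
by rewrite mul2n -addnn (leq_trans (leq_card_setU _ _).1) // leq_add ?leq_imset_card.
Qed.

Lemma sum_card_tedge M : {in M, forall t, wvv t} ->
  \sum_(e in tedge @: M) #|e| = 3 * #|tedge @: M|.
Proof.
move=> Mwvv; rewrite mulnC -sum_nat_const.
by apply: eq_bigr => _ /imsetP[t tM ->]; rewrite card_tedge // Mwvv.
Qed.

Lemma card_tcover M : wvv_matching M -> #|tcover M| = 3 * #|M|.
Proof.
move=> hM; have [_ inj triv] := hM.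
rewrite /tcover -cover_imset -(eqP triv) sum_card_tedge ?card_in_imset //.
exact: wvv_matching_wvv.
Qed.

(* Three-element edges covering 3|M| vertices must be distinct and pairwise
   disjoint. *)
Lemma wvv_matching_card M : {in M, forall t, wvv t && (tedge t \in H)} ->
  3 * #|M| <= #|tcover M| -> wvv_matching M.
Proof.
move=> Medge ge_cover; have Mwvv t : t \in M -> wvv t by case/Medge/andP.
have le_cover := leq_card_cover (tedge @: M).
rewrite cover_imset sum_card_tedge // in le_cover.
have img : #|tedge @: M| = #|M|.
  apply/eqP; rewrite eqn_leq leq_imset_card -(leq_pmul2l (isT : 0 < 3)).
  exact: leq_trans ge_cover le_cover.1.
constructor=> //; first exact/imset_injP/eqP.
by rewrite -le_cover.2 eqn_leq le_cover.1 img ge_cover.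
Qed.

Lemma wvv_matching_exchange M K N X :
  wvv_matching M -> K \subset M -> {in N, forall t, wvv t && (tedge t \in H)} ->
  #|N| <= #|K|.+1 -> [disjoint X & tcover M] -> #|X| = 3 ->
  X :|: tcover K \subset tcover N ->
  wvv_matching (N :|: (M :\: K)) /\ #|N :|: (M :\: K)| = #|M|.+1.
Proof.
move=> hM sKM Nedge cardN disXM cardX sXKN; set M' := N :|: (M :\: K).
have M'edge : {in M', forall t, wvv t && (tedge t \in H)}.
  by move=> t /setUP[/Nedge // | /setDP[tM _]]; apply: (wvv_matching_edge hM).
have cardM' : #|M'| <= #|M|.+1.
  rewrite (leq_trans (leq_card_setU _ _).1) // cardsD (setIidPr sKM).
  by have := subset_leq_card sKM; lia.
have coverM' : 3 * #|M|.+1 <= #|tcover M'|.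
  have -> : 3 * #|M|.+1 = #|X :|: tcover M|.
    by rewrite cardsU (disjoint_setI0 disXM) cards0 subn0 cardX card_tcover //; lia.
  apply/subset_leq_card; rewrite -{1}(setID M K) (setIidPr sKM) !tcover_setU setUA.
  exact: setSU.
have hM' : wvv_matching M' by apply: wvv_matching_card => //; lia.
by split=> //; have := card_tcover hM'; lia.
Qed.

Lemma extend_by_edge M t : wvv_matching M -> wvv t -> tedge t \in H ->
  [disjoint tedge t & tcover M] -> exists M', wvv_matching M' /\ #|M'| = #|M|.+1.
Proof.
move=> hM ht tH dis; exists ([set t] :|: (M :\: set0)).
apply: (wvv_matching_exchange hM (sub0set M)) dis (card_tedge ht) _ => //.
- by move=> s /set1P->; rewrite ht tH.
- by rewrite cards1 cards0.
- by rewrite tcover1 /tcover big_set0 setU0 subxx.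
Qed.

Definition switch_w (w : T) (p : (T * T * T) * (T * T * T)) : T * T * T :=
  (w, ta p.1, tb p.2).
Definition switch_x (x : T) (p : (T * T * T) * (T * T * T)) : T * T * T :=
  (tw p.1, x, ta p.2).
Definition switch_y (y : T) (p : (T * T * T) * (T * T * T)) : T * T * T :=
  (tw p.2, y, tb p.1).

Lemma switch_tcover w x y t1 t2 :
  [set w; x; y] :|: tcover [set t1; t2] \subset
  tcover [set switch_w w (t1, t2); switch_x x (t1, t2); switch_y y (t1, t2)].
Proof.
rewrite !tcover_setU !tcover1; apply/subsetP=> z; rewrite !inE /=.
by do ![case/orP | move/eqP->]; rewrite !eqxx ?orbT.
Qed.

Lemma switch_wvv M w x y p : wvv_matching M -> p \in offdiag M -> w \in W ->
  x \in ~: W :\: tcover M -> y \in ~: W :\: tcover M ->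
  [/\ wvv (switch_w w p), wvv (switch_x x p) & wvv (switch_y y p)].
Proof.
case: p => t1 t2 hM; rewrite mem_offdiag !inE => /and3P[t1M t2M t12] wW.
move=> /andP[xc xV] /andP[yc yV].
have [w1W a1V b1V _] := and4P (wvv_matching_wvv hM t1M).
have [w2W a2V b2V _] := and4P (wvv_matching_wvv hM t2M).
have [_ a1E b1E] := tedge_vertices t1; have [_ a2E b2E] := tedge_vertices t2.
have ab : ta t1 != tb t2.
  by apply: contraNneq t12 => e; apply/eqP/(wvv_matching_uniq hM t1M t2M a1E); rewrite e.
have xa : x != ta t2 by apply: contraNneq xc => ->; apply: mem_tcover t2M a2E.
have yb : y != tb t1 by apply: contraNneq yc => ->; apply: mem_tcover t1M b1E.
by split; apply/and4P; split.
Qed.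

Lemma extend_by_switch M w x y t1 t2 : wvv_matching M -> (t1, t2) \in offdiag M ->
  w \in W :\: tcover M -> x \in ~: W :\: tcover M -> y \in ~: W :\: tcover M -> x != y ->
  [&& tedge (switch_w w (t1, t2)) \in H, tedge (switch_x x (t1, t2)) \in H
    & tedge (switch_y y (t1, t2)) \in H] ->
  exists M', wvv_matching M' /\ #|M'| = #|M|.+1.
Proof.
move=> hM pM wWM xU yU xy /and3P[s1H s2H s3H].
have /setDP[wW wc] := wWM.
have /setDP[/[!inE] xV xc] := xU; have /setDP[/[!inE] yV yc] := yU.
have [s1 s2 s3] := switch_wvv hM pM wW xU yU.
move: (pM); rewrite mem_offdiag => /and3P[t1M t2M t12].
have xyz : wvv (w, x, y) by apply/and4P.
eexists; apply: (wvv_matching_exchange hM _ _ _ (disjoint_set3_tcover wc xc yc)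
  (card_tedge xyz) (switch_tcover w x y t1 t2)).
- by apply/subsetP=> t /set2P[]->.
- by move=> t /setUP[/set2P[]|/set1P]->; apply/andP.
- rewrite cards2 t12 (leq_trans (leq_card_setU _ _).1) // cards1 cards2 addn1.
  by case: (_ != _).
Qed.

Lemma card_missing_pairs (I : finType) (D : {set I}) (phi : I -> {set T}) v :
  {in D &, injective phi} -> {in D, forall i, phi i \in link (Hnd W) v} ->
  #|[set i in D | phi i \notin link H v]| <= #|missing_links v|.
Proof.
move=> inj Dphi; set B := [set i in D | phi i \notin link H v].
have injB : {in B &, injective phi} by apply: sub_in2 inj => i /setIdP[].
rewrite -(card_in_imset injB).
apply/subset_leq_card/subsetP=> P /imsetP[i /setIdP[iD ni] ->].
by rewrite inE ni Dphi.
Qed.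

Lemma card_pairs_missing (U : {set T}) w : w \in W -> U \subset ~: W ->
  (forall P : {set T}, P \subset U -> #|P| = 2 -> P \notin link H w) ->
  'C(#|U|, 2) <= #|missing_links w|.
Proof.
move=> wW UV noP; rewrite -cards_draws; apply/subset_leq_card/subsetP=> P.
rewrite inE => /andP[PU P2]; rewrite in_setD noP ?(eqP P2) //=.
have /cards2P[a [b [ab ePab]]] := P2; rewrite ePab.
have aV : a \notin W by rewrite -in_setC (subsetP UV) // (subsetP PU) // ePab set21.
have bV : b \notin W by rewrite -in_setC (subsetP UV) // (subsetP PU) // ePab set22.
have hw : wvv (w, a, b) by apply/and4P.
by rewrite (wvv_link_w _ hw) wvv_Hnd.
Qed.

(* Since every vertex lies in at most one edge of M, the unordered pair
   {f t1, g t2} determines (t1, t2); the crossed case is ruled out by f t != g t. *)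
Lemma offdiag_pair_inj M (f g : T * T * T -> T) : wvv_matching M ->
  {in M, forall t, [/\ f t \in tedge t, g t \in tedge t & f t != g t]} ->
  {in offdiag M &, injective (fun p => [set f p.1; g p.2])}.
Proof.
move=> hM fg [t1 t2] [t1' t2']; rewrite !mem_offdiag /=.
move=> /and3P[t1M t2M t12] /and3P[t1M' t2M' _] e.
have fE t : t \in M -> f t \in tedge t by case/fg.
have gE t : t \in M -> g t \in tedge t by case/fg.
have same := wvv_matching_uniq hM.
have /set2P[ef|ef] : f t1 \in [set f t1'; g t2'] by rewrite -e set21.
all: have /set2P[eg|eg] : g t2 \in [set f t1'; g t2'] by rewrite -e set22.
- case/eqP: t12; apply: (same (f t1)) => //; first exact: fE.
  by rewrite ef -eg; exact: gE.
- have -> : t1 = t1' by apply: (same (f t1)) => //; [exact: fE | rewrite ef; exact: fE].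
  by have -> : t2 = t2' by apply: (same (g t2)) => //; [exact: gE | rewrite eg; exact: gE].
- have e1 : t2' = t1 by apply: (same (f t1)) => //; [rewrite ef; exact: gE | exact: fE].
  by case: (fg t1 t1M) => _ _; rewrite ef e1 eqxx.
- case/eqP: t12; apply: (same (g t2)) => //; last exact: gE.
  by rewrite eg -ef; exact: fE.
Qed.

Lemma card_offdiag_missing M w x y : wvv_matching M -> w \in W :\: tcover M ->
  x \in ~: W :\: tcover M -> y \in ~: W :\: tcover M ->
  {in offdiag M, forall p, ~~ [&& tedge (switch_w w p) \in H,
      tedge (switch_x x p) \in H & tedge (switch_y y p) \in H]} ->
  #|M| * #|M|.-1 <= #|missing_links w| + #|missing_links x| + #|missing_links y|.
Proof.
move=> hM /setDP[wW _] xU yU noswitch; rewrite -card_offdiag.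
set D := offdiag M; have Mwvv := wvv_matching_wvv hM.
have sw p : p \in D -> [/\ wvv (switch_w w p), wvv (switch_x x p) & wvv (switch_y y p)].
  by move=> pD; apply: switch_wvv hM pD wW xU yU.
have inj_w : {in D &, injective (fun p => [set ta p.1; tb p.2])}.
  apply: offdiag_pair_inj hM _ => t /Mwvv /wvv_neq[wa wb ab].
  by have [wE aE bE] := tedge_vertices t.
have inj_x : {in D &, injective (fun p => [set tw p.1; ta p.2])}.
  apply: offdiag_pair_inj hM _ => t /Mwvv /wvv_neq[wa wb ab].
  by have [wE aE bE] := tedge_vertices t.
have inj_y : {in D &, injective (fun p => [set tw p.2; tb p.1])}.
  move=> p q pD qD; rewrite /= !(setUC [set tw _]); apply: offdiag_pair_inj pD qD => //.
  move=> t /Mwvv /wvv_neq[wa wb ab]; have [wE aE bE] := tedge_vertices t.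
  by rewrite eq_sym.
pose Bw := [set p in D | [set ta p.1; tb p.2] \notin link H w].
pose Bx := [set p in D | [set tw p.1; ta p.2] \notin link H x].
pose By := [set p in D | [set tw p.2; tb p.1] \notin link H y].
have sub : D \subset Bw :|: Bx :|: By.
  apply/subsetP=> p pD; have [h1 h2 h3] := sw p pD; move: (noswitch p pD).
  rewrite -(wvv_link_w _ h1) -(wvv_link_a _ h2) -(wvv_link_a _ h3) !negb_and /Bw /Bx /By.
  case/orP=> [nw | /orP[nx | ny]]; apply/setUP;
    [left; apply/setUP; left | left; apply/setUP; right | right]; exact/setIdP.
apply: leq_trans (subset_leq_card sub) _.
apply: leq_trans (leq_card_setU _ _).1 (leq_add _ _).
  apply: leq_trans (leq_card_setU _ _).1 (leq_add _ _).
    apply: card_missing_pairs inj_w _ => p /sw[h _ _].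
    by rewrite (wvv_link_w _ h) wvv_Hnd.
  apply: card_missing_pairs inj_x _ => p /sw[_ h _].
  by rewrite (wvv_link_a _ h) wvv_Hnd.
apply: card_missing_pairs inj_y _ => p /sw[_ _ h].
by rewrite (wvv_link_a _ h) wvv_Hnd.
Qed.

Section Step.

Hypothesis few_missing : forall v, 1000 * 1000 * #|missing_links v| <= #|T| ^ 2.
Hypothesis W_small : 3 * #|W| <= #|T|.

Lemma wvv_matching_step M : wvv_matching M -> #|M| < #|W| ->
  exists M', wvv_matching M' /\ #|M'| = #|M|.+1.
Proof.
move=> hM ltMW; have Mwvv := wvv_matching_wvv hM.
set U := ~: W :\: tcover M.
have cardU : #|~: W| <= #|U| + 2 * #|M| := card_V_tcover Mwvv.
have cardWV := cardsC W.
have [w wWM] : exists w, w \in W :\: tcover M.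
  by apply/set0Pn; rewrite -card_gt0; have := card_W_tcover Mwvv; lia.
have /setDP[wW wc] := wWM.
case: (boolP [exists P : {set T}, [&& P \subset U, #|P| == 2 & P \in link H w]]).
  case/existsP=> P /and3P[PU /cards2P[a [b [ab ePab]]]]; rewrite ePab => PH.
  have /setDP[/[!inE] aV ac] : a \in U by rewrite (subsetP PU) // ePab set21.
  have /setDP[/[!inE] bV bc] : b \in U by rewrite (subsetP PU) // ePab set22.
  have ht : wvv (w, a, b) by apply/and4P.
  apply: (extend_by_edge hM ht); first by rewrite -(wvv_link_w _ ht).
  exact: disjoint_set3_tcover.
move=> no_edge; have /card_gt1P[x [y [xU yU xy]]] : 1 < #|U| by lia.
case: (boolP [exists p in offdiag M, [&& tedge (switch_w w p) \in H,
    tedge (switch_x x p) \in H & tedge (switch_y y p) \in H]]).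
  by case/exists_inP=> -[t1 t2] pM; apply: extend_by_switch hM pM wWM xU yU xy.
move/exists_inPn=> noswitch; exfalso.
have Cu : 'C(#|U|, 2) <= #|missing_links w|.
  apply: card_pairs_missing wW (subsetDl _ _) _ => P PU P2.
  by apply: contraNN no_edge => PH; apply/existsP; exists P; rewrite PU P2 eqxx PH.
have Ck := card_offdiag_missing hM wWM xU yU noswitch.
have VU : #|T| - #|W| <= #|U| + 2 * #|M| by lia.
exact: greedy_count_contradiction W_small ltMW VU Cu Ck (few_missing w)
  (few_missing x) (few_missing y).
Qed.

End Step.

End WvvMatching.

Lemma good_missing_links (R : realFieldType) (alpha : R) (T : finType)
    (W : {set T}) (H : {set {set T}}) (v : T) :
  (alpha < 1 / 1000000%:R)%R -> good W H alpha v ->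
  1000 * 1000 * #|missing_links W H v| <= #|T| ^ 2.
Proof.
rewrite ltr_pdivlMr ?ltr0n // => alpha_small le_alpha.
rewrite -(ler_nat R) natrM natrX.
(* [1000000] is a [Nat.of_num_uint] numeral, opaque to [lia] and too large to be
   unfolded by unification; it is turned into [1000 * 1000] once, by computation. *)
have million : 1000000 = 1000 * 1000 by apply/eqP; vm_compute.
rewrite million in alpha_small.
apply: (le_trans (ler_wpM2l (ler0n _ _) le_alpha)).
rewrite mulrA; apply: ler_piMl; first exact: exprn_ge0.
by rewrite mulrC; apply: ltW.
Qed.

Theorem lemma4p2 (R : realFieldType) (alpha : R) (n d : nat)
    (T : finType) (W : {set T}) (H : {set {set T}}) :
  (0 < alpha)%R -> (alpha < 1 / 1000000%:R)%R ->
  (n%:R / 150%:R <= d%:R :> R)%R -> (d%:R <= n%:R / 3%:R :> R)%R ->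
  #|T| = n -> #|W| = d ->
  uniform3 H ->
  (forall v : T, good W H alpha v) ->
  exists M : {set {set T}}, matching H M && (#|M| == d).
Proof.
move=> _ alpha_small _ d_small cardT cardW _ all_good.
have W_small : 3 * #|W| <= #|T|.
  by move: d_small; rewrite ler_pdivlMr ?ltr0n // -natrM ler_nat cardT cardW mulnC.
have few_missing v := good_missing_links alpha_small (all_good v).
have grow j : j <= #|W| -> exists M, wvv_matching W H M /\ #|M| = j.
  elim: j => [_ | j IH ltjW].
    exists set0; split; last exact: cards0.
    by apply: wvv_matching_card => [t|]; rewrite ?inE ?cards0.
  have [M [hM cardM]] := IH (ltnW ltjW); rewrite -cardM in ltjW *.
  exact: (wvv_matching_step few_missing W_small hM ltjW).
have [M [hM cardM]] := grow _ (leqnn _).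
have [matchM cardE] := wvv_matching_matching hM.
by exists [set tedge t | t in M]; rewrite matchM cardE cardM cardW eqxx.
Qed.
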